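(* Let $\Omega_m$ be a finite set with $m\in\mathbb N$ elements and $v_0:2^{\Omega_m}\to[0,\infty)$ non-decreasing with $v_0(\emptyset)=0$, and suppose there is $g:\{1,\dots,m\}\to[0,\infty)$ with $v_0(A)=g(|A|)$ for all nonempty $A\subset\Omega_m$. Define $v_{n+1}(A)=\sup_{\mathcal I\in\Sigma}\mu_{v_n,\mathcal I}(A)$, $A\subset\Omega_m$, $n\ge0$. Then $v_2=v_1$, and $v_1$ is submodular.
   Context: $\Sigma$ denotes the set of all chains $\mathcal I\subset2^{\Omega_m}$ (totally ordered by inclusion) containing $\emptyset$ and $\Omega_m$ and generating $2^{\Omega_m}$ as a $\sigma$-algebra (equivalently, maximal chains of subsets). For non-decreasing $v$ and $\mathcal I\in\Sigma$, $\mu_{v,\mathcal I}$ is the unique measure on $2^{\Omega_m}$ with $\mu_{v,\mathcal I}(I)=v(I)$ for $I\in\mathcal I$. Non-decreasing means $v(A)\le v(B)$ for $A\subset B$; submodular means $v(A)+v(B)\ge v(A\cup B)+v(A\cap B)$. *)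

From HB Require Import structures.
From mathcomp Require Import all_boot all_order all_algebra.
From mathcomp Require Import classical_sets reals.
Set Implicit Arguments. Unset Strict Implicit. Unset Printing Implicit Defensive.
Import Order.TTheory GRing.Theory Num.Theory.
Local Open Scope ring_scope.

Definition nondecreasing_setfun (R : realType) (T : finType) (v : {set T} -> R) :=
  forall A B : {set T}, A \subset B -> v A <= v B.

Definition submodular_setfun (R : realType) (T : finType) (v : {set T} -> R) :=
  forall A B : {set T}, v (A :|: B) + v (A :&: B) <= v A + v B.

Definition is_chain (T : finType) (I : {set {set T}}) :=
  forall A B : {set T}, A \in I -> B \in I -> (A \subset B) || (B \subset A).

(* I generates 2^T as a sigma-algebra: every family containing I and closed
   under complement and (finite = countable, T finite) union is all of 2^T. *)
Definition generates_powerset (T : finType) (I : {set {set T}}) :=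
  forall F : {set {set T}}, I \subset F ->
    (forall A : {set T}, A \in F -> ~: A \in F) ->
    (forall A B : {set T}, A \in F -> B \in F -> A :|: B \in F) ->
    F = [set: {set T}].

Definition in_Sigma (T : finType) (I : {set {set T}}) :=
  [/\ is_chain I, finset.set0 \in I, [set: T] \in I & generates_powerset I].

Definition is_measure (R : realType) (T : finType) (mu : {set T} -> R) :=
  [/\ mu finset.set0 = 0, forall A : {set T}, 0 <= mu A &
      forall A B : {set T}, [disjoint A & B] -> mu (A :|: B) = mu A + mu B].

(* mu is "mu_{v,I}": a measure agreeing with v on the chain I
   (unique when it exists, e.g. for nondecreasing v). *)
Definition is_mu_v_I (R : realType) (T : finType) (v : {set T} -> R)
  (I : {set {set T}}) (mu : {set T} -> R) :=
  is_measure mu /\ forall J : {set T}, J \in I -> mu J = v J.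

Definition vnext (R : realType) (T : finType) (v : {set T} -> R) : {set T} -> R :=
  fun A => sup [set x : R | exists (I : {set {set T}}) (mu : {set T} -> R), [/\ in_Sigma I, is_mu_v_I v I mu & x = mu A]].

Fixpoint viter (R : realType) (T : finType) (v0 : {set T} -> R) (n : nat) : {set T} -> R :=
  match n with
  | O => v0
  | S k => vnext (viter v0 k)
  end.

(* If v = h o card, a chain in Sigma is a maximal chain set0 = C_0 < ... < C_n = T,
   that is, a ranking of the points, and mu_{v,I} gives the point of rank i the mass
   h (i+1) - h i.  Maximizing over rankings, v_1 A is the sum of the #|A| largest
   increments of h: again a function of #|A|, now with nonincreasing increments.
   Such a concave function of the cardinality is submodular, and iterating once more
   on increments that are already sorted gives v_1 back. *)

From HB Require Import structures.
From mathcomp Require Import all_boot all_order all_algebra.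
From mathcomp Require Import classical_sets reals.
(* Re-imported so that [subsetP], [set0], ... refer to finite sets, not to classical_sets. *)
From mathcomp Require Import fintype finset.
From mathcomp Require Import lra zify.
Set Implicit Arguments. Unset Strict Implicit. Unset Printing Implicit Defensive.
Import Order.TTheory GRing.Theory Num.Theory.
Local Open Scope ring_scope.

Section TopSum.
Variable R : realDomainType.
Implicit Types (d e h : nat -> R) (n k : nat) (s : seq nat).

Definition incr h k := h k.+1 - h k.

Let ge_trans : transitive (fun x y : R => y <= x).
Proof. by move=> y x z xy yz; exact: le_trans yz xy. Qed.

Definition decr_order d n := sort (fun i j => d j <= d i) (iota 0 n).

Definition top_values d n := [seq d i | i <- decr_order d n].

Definition top_sum d n k := \sum_(i < k) (top_values d n)`_i.

Lemma perm_decr_order d n : perm_eq (decr_order d n) (iota 0 n).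
Proof. by rewrite perm_sort. Qed.

Lemma size_decr_order d n : size (decr_order d n) = n.
Proof. by rewrite (perm_size (perm_decr_order d n)) size_iota. Qed.

Lemma mem_decr_order d n i : (i \in decr_order d n) = (i < n)%N.
Proof. by rewrite (perm_mem (perm_decr_order d n)) mem_iota. Qed.

Lemma size_top_values d n : size (top_values d n) = n.
Proof. by rewrite size_map size_decr_order. Qed.

Lemma sorted_top_values d n : sorted (fun x y => y <= x) (top_values d n).
Proof. by rewrite sorted_map; apply: sort_sorted => i j; exact: le_total. Qed.

Lemma top_values_nonincr d n i j : (i <= j < n)%N ->
  (top_values d n)`_j <= (top_values d n)`_i.
Proof.
case/andP=> ij jn.
apply: (sorted_leq_nth ge_trans (@lexx _ _)) => //; first exact: sorted_top_values.
by rewrite inE size_top_values (leq_ltn_trans ij).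
by rewrite inE size_top_values.
Qed.

Lemma top_values_ge0 d n k : (forall i, (i < n)%N -> 0 <= d i) ->
  0 <= (top_values d n)`_k.
Proof.
move=> d_ge0; have [kn|nk] := ltnP k n; last first.
  by rewrite nth_default // size_top_values.
rewrite (nth_map 0%N) ?size_decr_order //; apply: d_ge0.
by rewrite -(mem_decr_order d) mem_nth ?size_decr_order.
Qed.

Lemma top_sum0 d n : top_sum d n 0 = 0.
Proof. exact: big_ord0. Qed.

Lemma incr_top_sum d n k : incr (top_sum d n) k = (top_values d n)`_k.
Proof. by rewrite /incr /top_sum big_ord_recr /= addrAC subrr add0r. Qed.

Lemma top_sum_take d n k : (k <= n)%N ->
  top_sum d n k = \sum_(i <- take k (decr_order d n)) d i.
Proof.
move=> kn; rewrite -(big_map d xpredT idfun) map_take (big_nth 0) size_takel;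
  last by rewrite size_top_values.
by rewrite big_mkord; apply: eq_bigr => i _; rewrite nth_take.
Qed.

Lemma sum_le_prefix_sum e n s : (forall i j, (i <= j < n)%N -> e j <= e i) ->
  uniq s -> all (gtn n) s -> \sum_(i <- s) e i <= \sum_(i < size s) e i.
Proof.
elim: n s => [|n IHn] s e_nonincr s_uniq s_lt.
  by case: s s_lt {s_uniq} => // _; rewrite big_nil big_ord0.
have e_nonincr' i j : (i <= j < n)%N -> e j <= e i.
  by case/andP=> ij jn; apply: e_nonincr; rewrite ij ltnW.
have [ns|ns] := boolP (n \in s); last first.
  apply: IHn => //; apply/allP => i si.
  have ni : i != n by apply: contraNneq ns => <-.
  by have := allP s_lt i si; rewrite /= ltnS leq_eqVlt (negbTE ni).
have rem_uniq := rem_uniq n s_uniq.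
have rem_lt : all (gtn n) (rem n s).
  apply/allP => i; rewrite mem_rem_uniq // inE => /andP[ni si].
  by have := allP s_lt i si; rewrite /= ltnS leq_eqVlt (negbTE ni).
have size_rem_le : (size (rem n s) <= n)%N.
  have : {subset rem n s <= iota 0 n} by move=> i /(allP rem_lt); rewrite mem_iota.
  by move/(uniq_leq_size rem_uniq); rewrite size_iota.
have size_s : size s = (size (rem n s)).+1 := perm_size (perm_to_rem ns).
rewrite (perm_big _ (perm_to_rem ns)) size_s big_cons big_ord_recr.
set k := size (rem n s) in size_rem_le *; rewrite /= addrC.
by rewrite lerD ?(IHn _ e_nonincr') // e_nonincr // size_rem_le /=.
Qed.

Lemma le_top_sum d n s : uniq s -> all (gtn n) s ->
  \sum_(i <- s) d i <= top_sum d n (size s).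
Proof.
move=> s_uniq s_lt; set order := decr_order d n.
have s_order i : i \in s -> i \in order by rewrite mem_decr_order => /(allP s_lt).
have -> : \sum_(i <- s) d i = \sum_(p <- [seq index i order | i <- s]) (top_values d n)`_p.
  rewrite big_map; apply: eq_big_seq => i si.
  by rewrite (nth_map 0%N) ?nth_index ?index_mem ?s_order.
rewrite -(size_map (index^~ order)); apply: sum_le_prefix_sum.
- by move=> i j; exact: top_values_nonincr.
- by rewrite map_inj_in_uniq // => i j /s_order io /s_order jo; exact: index_inj.
- apply/allP => _ /mapP[i si ->].
  by rewrite /= -[n](size_decr_order d) index_mem s_order.
Qed.

Lemma top_values_incr_top_sum d n : top_values (incr (top_sum d n)) n = top_values d n.
Proof.
set tv := top_values d n.
have map_iota : [seq incr (top_sum d n) i | i <- iota 0 n] = tv.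
  by rewrite (eq_map (incr_top_sum d n)) -[in RHS](mkseq_nth 0 tv) size_top_values.
rewrite /top_values /decr_order sorted_sort ?map_iota //.
  by move=> j i k ij jk; exact: ge_trans ij jk.
by move: (sorted_top_values d n); rewrite -/tv -map_iota sorted_map.
Qed.

Lemma top_sum_incr_top_sum d n : top_sum (incr (top_sum d n)) n =1 top_sum d n.
Proof. by move=> k; rewrite /top_sum top_values_incr_top_sum. Qed.

End TopSum.

Section SetFunctions.
Variables (R : realType) (T : finType).
Implicit Types (v : {set T} -> R) (h : nat -> R) (A B : {set T}).

Lemma card_fun_homo v h : nondecreasing_setfun v -> (forall B, v B = h #|B|) ->
  forall k, (k < #|T|)%N -> h k <= h k.+1.
Proof.
move=> v_mono vE k kT; pose S j := [set x in take j (enum T)].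
have card_S j : (j <= #|T|)%N -> #|S j| = j.
  by move=> jT; rewrite cardsE (card_uniqP (take_uniq _ (enum_uniq _))) size_takel -?cardE.
rewrite -{1}(card_S k (ltnW kT)) -(card_S k.+1 kT) -!vE; apply: v_mono.
apply/subsetP => x; rewrite !inE (take_nth x) -?cardE // mem_rcons inE => ->.
exact: orbT.
Qed.

Lemma card_concave_submodular v h : (forall B, v B = h #|B|) ->
  (forall i j, (i <= j < #|T|)%N -> incr h j <= incr h i) -> submodular_setfun v.
Proof.
move=> vE h_concave A B; rewrite !vE.
have incr_sum x p : h (x + p)%N - h x = \sum_(k < p) incr h (x + k)%N.
  elim: p => [|p IHp]; first by rewrite addn0 subrr big_ord0.
  by rewrite big_ord_recr -IHp addnS /incr /=; lra.
have AB_A : (#|A :&: B| <= #|A|)%N by rewrite subset_leq_card ?subsetIl.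
set p := (#|A| - #|A :&: B|)%N.
have card_A : #|A| = (#|A :&: B| + p)%N by rewrite subnKC.
have card_AB : #|A :|: B| = (#|B| + p)%N.
  by have := cardsUI A B; rewrite card_A; lia.
suff : h (#|B| + p)%N - h #|B| <= h (#|A :&: B| + p)%N - h #|A :&: B|.
  by rewrite card_AB card_A; lra.
rewrite !incr_sum; apply: ler_sum => k _; apply: h_concave.
rewrite leq_add2r subset_leq_card ?subsetIr //=.
by rewrite (leq_trans _ (max_card (A :|: B))) // card_AB ltn_add2l.
Qed.

Lemma measure_sum1 (mu : {set T} -> R) A : is_measure mu ->
  mu A = \sum_(x in A) mu [set x].
Proof.
case=> mu0 _ muU.
suff mu_seq s : uniq s -> mu [set x in s] = \sum_(x <- s) mu [set x].
  by rewrite -big_enum -mu_seq ?enum_uniq //; congr mu; apply/setP => y; rewrite inE mem_enum.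
elim: s => [_|a s IHs /andP[as_ s_uniq]].
  by rewrite big_nil -mu0; congr mu; apply/setP => y; rewrite !inE.
rewrite big_cons -IHs // -muU ?disjoints1 ?inE //.
by congr mu; apply/setP => y; rewrite !inE.
Qed.

End SetFunctions.

Section MaximalChains.
Variable T : finType.
Implicit Types (I : {set {set T}}) (A K : {set T}).

Lemma generates_powerset_separates I x y : generates_powerset I -> x != y ->
  exists2 K, K \in I & (x \in K) != (y \in K).
Proof.
move=> genI xy.
have [/exists_inP //|/exists_inPn no_sep] := boolP [exists K in I, (x \in K) != (y \in K)].
pose F := [set A : {set T} | (x \in A) == (y \in A)].
have F_full : F = [set: {set T}].
  apply: genI => [|A|A B]; rewrite ?inE.
  - by apply/subsetP => K /no_sep; rewrite inE negbK.
  - by move/eqP ->.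
  - by move=> /eqP-> /eqP->.
have : [set x] \in F by rewrite F_full inE.
by rewrite !inE eqxx [y == x]eq_sym (negbTE xy).
Qed.

Lemma chain_subset_card I K K' : is_chain I -> K \in I -> K' \in I ->
  (#|K| <= #|K'|)%N -> K \subset K'.
Proof.
move=> chI KI K'I le_KK'; case/orP: (chI _ _ KI K'I) => // K'K.
by rewrite -(subset_leqif_card K'K).2 eqn_leq subset_leq_card.
Qed.

Lemma chain_card_inj I K K' : is_chain I -> K \in I -> K' \in I ->
  #|K| = #|K'| -> K = K'.
Proof.
move=> chI KI K'I eq_KK'; apply/eqP; rewrite eqEsubset.
by rewrite !(chain_subset_card chI) // eq_KK'.
Qed.

Lemma setU_closed_set1_full (F : {set {set T}}) : set0 \in F ->
  (forall x, [set x] \in F) -> (forall A B, A \in F -> B \in F -> A :|: B \in F) ->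
  F = [set: {set T}].
Proof.
move=> F0 F_set1 F_union; apply/setP => A; rewrite inE.
have -> : A = \bigcup_(x in A) [set x].
  apply/setP => y; apply/idP/bigcupP => [yA|[x xA /set1P-> //]].
  by exists y; rewrite ?set11.
by apply: (big_ind (fun B => B \in F)) => // B C; exact: F_union.
Qed.

Section ChainRank.
Variable I : {set {set T}}.
Hypothesis sigI : in_Sigma I.

Definition chain_below x := [arg max_(K > set0 | (K \in I) && (x \notin K)) #|K|].

Lemma chain_belowP x :
  [/\ chain_below x \in I, x \notin chain_below x & chain_below x :|: [set x] \in I].
Proof.
have [chI I0 IT genI] := sigI; rewrite /chain_below.
case: arg_maxnP => [|J /andP[JI xJ] J_max]; first by rewrite I0 inE.
have [|J' /andP[J'I xJ'] J'_min] := @arg_minnP _ [set: T]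
  (fun K => (K \in I) && (x \in K)) (fun K => #|K|); first by rewrite IT inE.
have sub_J K : K \in I -> x \notin K -> K \subset J.
  by move=> KI xK; apply: (chain_subset_card chI KI JI); apply: J_max; rewrite KI.
have J'_sub K : K \in I -> x \in K -> J' \subset K.
  by move=> KI xK; apply: (chain_subset_card chI J'I KI); apply: J'_min; rewrite KI.
suff -> : J :|: [set x] = J' by [].
apply/eqP; rewrite eqEsubset subUset sub1set xJ' andbT; apply/andP; split.
  apply: (chain_subset_card chI JI J'I); rewrite leqNgt; apply/negP.
  move/ltnW/(chain_subset_card chI J'I JI)/subsetP/(_ x xJ').
  by rewrite (negbTE xJ).
(* A point y <> x of J' is separated from x by some K in I, which lies either
   above J' or below J. *)
apply/subsetP => y yJ'; rewrite !inE; have [->|yx] := eqVneq y x; first by rewrite orbT.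
have [K KI] := generates_powerset_separates genI yx.
have [xK|xK] := boolP (x \in K).
  by rewrite (subsetP (J'_sub K KI xK)).
move=> yK; rewrite (subsetP (sub_J K KI xK)) //.
by move: yK; case: (y \in K).
Qed.

Definition chain_rank x := #|chain_below x|.

Lemma card_chain_above x : #|chain_below x :|: [set x]| = (chain_rank x).+1.
Proof. by have [_ xJ _] := chain_belowP x; rewrite setUC cardsU1 xJ. Qed.

Lemma chain_rank_inj : injective chain_rank.
Proof.
have chI : is_chain I by case: sigI.
move=> x y eq_xy.
have [xI xJ xJI] := chain_belowP x; have [yI yJ yJI] := chain_belowP y.
have eq_below := chain_card_inj chI xI yI eq_xy.
have eq_above : chain_below x :|: [set x] = chain_below y :|: [set y].
  by apply: (chain_card_inj chI xJI yJI); rewrite !card_chain_above eq_xy.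
have : x \in chain_below y :|: [set y] by rewrite -eq_above !inE eqxx orbT.
by rewrite !inE -eq_below (negbTE xJ) => /eqP.
Qed.

Lemma chain_rank_lt x : (chain_rank x < #|T|)%N.
Proof. by rewrite -card_chain_above max_card. Qed.

Lemma chain_measure_rank (R : realType) (v mu : {set T} -> R) (h : nat -> R) :
  (forall B, v B = h #|B|) -> is_mu_v_I v I mu ->
  forall B, mu B = \sum_(x in B) incr h (chain_rank x).
Proof.
move=> vE [mu_meas mu_v] B; rewrite (measure_sum1 _ mu_meas); apply: eq_bigr => x _.
have [xI xJ xJI] := chain_belowP x; have [_ _ muU] := mu_meas.
have disj : [disjoint chain_below x & [set x]] by rewrite disjoint_sym disjoints1.
move: (muU _ _ disj); rewrite (mu_v _ xJI) (mu_v _ xI) !vE card_chain_above.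
by rewrite /incr => ->; rewrite addrAC subrr add0r.
Qed.

End ChainRank.
End MaximalChains.

Section RankChain.
Variables (T : finType) (rk : T -> nat).
Hypotheses (rk_inj : injective rk) (rk_lt : forall x, (rk x < #|T|)%N).

Definition rank_prefix k := [set x | (rk x < k)%N].

Definition rank_chain := [set rank_prefix k | k : 'I_#|T|.+1].

Lemma perm_rank : perm_eq [seq rk x | x <- enum T] (iota 0 #|T|).
Proof.
have rk_uniq : uniq [seq rk x | x <- enum T] by rewrite map_inj_uniq ?enum_uniq.
have rk_iota : {subset [seq rk x | x <- enum T] <= iota 0 #|T|}.
  by move=> _ /mapP[x _ ->]; rewrite mem_iota add0n rk_lt.
have size_le : (size (iota 0 #|T|) <= size [seq rk x | x <- enum T])%N.
  by rewrite size_iota size_map -cardE.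
have [_ mem_eq] := uniq_min_size rk_uniq rk_iota size_le.
by apply: uniq_perm; rewrite ?iota_uniq.
Qed.

Lemma big_rank_prefix (V : Type) (idx : V) (op : Monoid.com_law idx) (F : nat -> V) k :
  (k <= #|T|)%N -> \big[op/idx]_(x in rank_prefix k) F (rk x) = \big[op/idx]_(i < k) F i.
Proof.
move=> kT; rewrite (eq_bigl (fun x => (x \in T) && (rk x < k)%N)) => [|x]; last by rewrite !inE.
rewrite -(big_image_cond _ _ rk T (fun i => i < k)%N F) (perm_big _ perm_rank).
by rewrite -(big_mkord xpredT) (big_nat_widen _ _ _ _ _ kT) /index_iota !subn0.
Qed.

Lemma card_rank_prefix k : (k <= #|T|)%N -> #|rank_prefix k| = k.
Proof. by move=> kT; rewrite -sum1_card (big_rank_prefix _ (fun=> 1%N) kT) sum1_card card_ord. Qed.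

Lemma rank_prefix0 : rank_prefix 0 = set0.
Proof. by apply/setP => x; rewrite !inE. Qed.

Lemma rank_prefix_in k : (k <= #|T|)%N -> rank_prefix k \in rank_chain.
Proof. by move=> kT; apply/imsetP; exists (Ordinal (kT : (k < #|T|.+1)%N)). Qed.

Lemma rank_chain_is_chain : is_chain rank_chain.
Proof.
move=> _ _ /imsetP[i _ ->] /imsetP[j _ ->]; apply/orP.
have [ij|/ltnW ji] := leqP i j; [left|right]; apply/subsetP => x; rewrite !inE => rx.
  exact: leq_trans rx ij.
exact: leq_trans rx ji.
Qed.

Lemma rank_chain_generates : generates_powerset rank_chain.
Proof.
move=> F sub_F F_compl F_union.
have F_prefix k : (k <= #|T|)%N -> rank_prefix k \in F.
  by move=> kT; rewrite (subsetP sub_F) ?rank_prefix_in.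
apply: setU_closed_set1_full => // [|x].
  by have := F_prefix 0%N (leq0n _); rewrite rank_prefix0.
have -> : [set x] = ~: (~: rank_prefix (rk x).+1 :|: rank_prefix (rk x)).
  apply/setP => y; rewrite !inE negb_or negbK -leqNgt ltnS -eqn_leq.
  by rewrite (inj_eq rk_inj).
apply: (F_compl); apply: (F_union); first apply: (F_compl).
  exact: F_prefix.
exact/F_prefix/ltnW.
Qed.

Lemma rank_chain_Sigma : in_Sigma rank_chain.
Proof.
split; [exact: rank_chain_is_chain | | | exact: rank_chain_generates].
  by rewrite -rank_prefix0 rank_prefix_in.
have -> : [set: T] = rank_prefix #|T| by apply/setP => x; rewrite !inE rk_lt.
by rewrite rank_prefix_in.
Qed.


Definition rank_measure (R : realType) (h : nat -> R) (B : {set T}) := \sum_(x in B) incr h (rk x).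

Lemma rank_measure_mu (R : realType) (v : {set T} -> R) (h : nat -> R) :
  (forall B, v B = h #|B|) -> h 0%N = 0 -> (forall k, (k < #|T|)%N -> h k <= h k.+1) ->
  is_mu_v_I v rank_chain (rank_measure h).
Proof.
move=> vE h0 h_homo; split; first split.
- exact: big_set0.
- by move=> B; apply: sumr_ge0 => x _; rewrite subr_ge0 h_homo.
- move=> B C BC; rewrite /rank_measure -bigU //.
  by apply: eq_bigl => x; rewrite !inE.
move=> _ /imsetP[k _ ->]; have kT : (k <= #|T|)%N by rewrite -ltnS.
rewrite vE card_rank_prefix // /rank_measure (big_rank_prefix _ (incr h)) //.
by rewrite -(big_mkord xpredT) telescope_sumr // h0 subr0.
Qed.

End RankChain.

Lemma exists_rank_prefix (T : finType) (A : {set T}) (s : seq nat) :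
  perm_eq s (iota 0 #|T|) ->
  exists rk : T -> nat,
    [/\ injective rk, forall x, (rk x < #|T|)%N & [seq rk x | x <- enum A] = take #|A| s].
Proof.
move=> s_perm; pose L := enum A ++ enum (~: A).
have L_all x : x \in L by rewrite mem_cat !mem_enum inE orbN.
have L_uniq : uniq L.
  rewrite cat_uniq !enum_uniq andbT /=; apply/hasPn => x.
  by rewrite !mem_enum inE.
have s_uniq : uniq s by rewrite (perm_uniq s_perm) iota_uniq.
have size_L : size L = size s.
  by rewrite size_cat -!cardE cardsC (perm_size s_perm) size_iota.
have index_lt x : (index x L < size s)%N by rewrite -size_L index_mem.
pose rk x := nth 0%N s (index x L).
have map_rk : [seq rk x | x <- L] = s.
  apply: (@eq_from_nth _ 0%N); rewrite size_map // => i iL.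
  have : (0 < size s)%N by rewrite -size_L (leq_ltn_trans _ iL).
  rewrite (perm_size s_perm) size_iota => /card_gt0P[x0 _].
  by rewrite (nth_map x0) // /rk index_uniq.
exists rk; split.
- move=> x y /eqP; rewrite nth_uniq // => /eqP; exact: index_inj (L_all x) (L_all y).
- move=> x; have : rk x \in s by rewrite mem_nth.
  by rewrite (perm_mem s_perm) mem_iota.
- by rewrite -map_rk -map_take take_size_cat // cardE.
Qed.

Lemma sup_attained (R : realType) (E : set R) x :
  E x -> (forall y, E y -> y <= x) -> sup E = x.
Proof.
move=> Ex x_ub; apply/le_anti/andP; split.
  by apply: ge_sup; [exists x | move=> y /x_ub].
by apply: ub_le_sup; [exists x => y /x_ub | ].
Qed.

Lemma vnext_card (R : realType) (T : finType) (v : {set T} -> R) (h : nat -> R) :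
  (forall B, v B = h #|B|) -> h 0%N = 0 -> (forall k, (k < #|T|)%N -> h k <= h k.+1) ->
  forall A, vnext v A = top_sum (incr h) #|T| #|A|.
Proof.
move=> vE h0 h_homo A; apply: sup_attained.
  have [rk [rk_inj rk_lt rkA]] := exists_rank_prefix A (perm_decr_order (incr h) #|T|).
  exists (rank_chain rk), (rank_measure rk h); split.
  - exact: rank_chain_Sigma.
  - exact: rank_measure_mu.
  - by rewrite /rank_measure top_sum_take ?max_card // -rkA big_map big_enum.
move=> _ [I [mu [sigI muI ->]]].
rewrite (chain_measure_rank sigI vE muI).
have := @le_top_sum _ (incr h) #|T| [seq chain_rank I x | x <- enum A].
rewrite big_map big_enum size_map -cardE; apply.
  by rewrite map_inj_uniq ?enum_uniq //; exact: chain_rank_inj.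
by apply/allP => _ /mapP[x _ ->]; exact: chain_rank_lt.
Qed.

Unset Implicit Arguments.
Unset Strict Implicit.

Theorem proposition23 (R : realType) (m : nat) (T : finType) (v0 : {set T} -> R)
  (g : nat -> R) :
  #|T| = m ->
  (forall A, 0 <= v0 A) ->
  nondecreasing_setfun v0 ->
  v0 finset.set0 = 0 ->
  (forall k, (1 <= k <= m)%N -> 0 <= g k) ->
  (forall A : {set T}, A != finset.set0 -> v0 A = g #|A|) ->
  (forall A, viter v0 2 A = viter v0 1 A) /\ submodular_setfun (viter v0 1).
Proof.
(* Nonnegativity of v0 and g follows from monotonicity and v0 set0 = 0. *)
move=> _ _ v0_mono v0_set0 _ v0_g.
pose h0 k := if k is 0 then 0 else g k.
have v0E B : v0 B = h0 #|B|.
  have [->|B0] := eqVneq B finset.set0; first by rewrite cards0.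
  by rewrite v0_g // /h0; move: B0; rewrite -card_gt0; case: #|B|.
have h0_homo := card_fun_homo v0_mono v0E.
have v1E : forall A, viter v0 1 A = top_sum (incr h0) #|T| #|A|.
  exact: vnext_card v0E (erefl : h0 0%N = 0) h0_homo.
have incr_h0_ge0 i : (i < #|T|)%N -> 0 <= incr h0 i by move/h0_homo; rewrite subr_ge0.
have h1_homo k : (k < #|T|)%N -> top_sum (incr h0) #|T| k <= top_sum (incr h0) #|T| k.+1.
  by move=> _; rewrite -subr_ge0 -/(incr _ k) incr_top_sum; exact: top_values_ge0.
have v2E := vnext_card v1E (top_sum0 _ _) h1_homo.
split; first by move=> A; rewrite [LHS]v2E top_sum_incr_top_sum v1E.
apply: (card_concave_submodular v1E) => i j ij.
by rewrite !incr_top_sum top_values_nonincr.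
Qed.
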